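(* Let $n\ge 2$, let $\mathcal I$ be the set of transpositions in the symmetric group $S_n$, and let $H$ be an abelian group. Then $S_n=\langle\mathcal I\rangle$ and for every $\tau_1,\tau_2\in\mathcal I$ there exists $t\in S_n$ with $t^2=\tau_1\tau_2$. Consequently $S_1(S_n,H)=S_{1,2}(S_n,H)\cong \mathrm{Hom}(S_n,H)$. Moreover, every $f\in S_1(S_n,H)$ is determined by a choice of $u\in H[2]$ and satisfies $f(\sigma)=0$ if $\sigma$ is even and $f(\sigma)=u$ if $\sigma$ is odd.
   Context: $H$ is written additively; $H[2]=\{h\in H:2h=0\}$. For a group $G$ with identity $e$, $S_1(G,H)$ is the set of $f:G\to H$ with $f(e)=0$ and $f(xy)+f(xy^{-1})=2f(x)$ for all $x,y\in G$; $S_{1,2}(G,H)$ is the subset of those also satisfying $f(xy)+f(x^{-1}y)=2f(y)$ for all $x,y\in G$. *)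

From HB Require Import structures.
From mathcomp Require Import all_boot all_order all_algebra all_fingroup.
Set Implicit Arguments. Unset Strict Implicit. Unset Printing Implicit Defensive.
Import GRing.Theory.
Local Open Scope ring_scope.

Definition S1 (G : finGroupType) (H : zmodType) (f : G -> H) : Prop :=
  f 1%g = 0 /\ forall x y : G, f (x * y)%g + f (x * y^-1)%g = f x *+ 2.

Definition S12 (G : finGroupType) (H : zmodType) (f : G -> H) : Prop :=
  S1 f /\ forall x y : G, f (x * y)%g + f (x^-1 * y)%g = f y *+ 2.

Definition is_hom (G : finGroupType) (H : zmodType) (f : G -> H) : Prop :=
  forall x y : G, f (x * y)%g = f x + f y.

Definition transpositions (n : nat) : {set 'S_n} :=
  [set s : 'S_n | [exists x : 'I_n, exists y : 'I_n, (x != y) && (s == tperm x y)]].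

From HB Require Import structures.
From mathcomp Require Import all_boot all_order all_algebra all_fingroup.
Set Implicit Arguments. Unset Strict Implicit. Unset Printing Implicit Defensive.
Import GRing.Theory.
Local Open Scope ring_scope.

(* If f satisfies Jensen's equation then right multiplication by an involution
   preserves 2f, and right multiplication by an element of order 3 preserves 3f;
   hence f(x s) = f(x) whenever s has order 3 and is a product of two
   involutions, e.g. of two transpositions sharing a point.  Every product of two
   transpositions is a product of at most two such elements, so f(x s) = f(x)
   for every even permutation s, and f is 0 on even and u := f(τ) on odd
   permutations, with 2u = 0: f is a homomorphism to H[2].  Square roots of
   τ1 τ2 come from conjugating τ1 into τ2 by an involution s: (τ1 s)^2 = τ1 τ1^s. *)

Section JensenEquation.
Variables (G : finGroupType) (H : zmodType) (f : G -> H).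
Hypothesis f_S1 : S1 f.

Lemma S1_mul_invol (x y : G) : (y^-1 = y)%g -> f (x * y)%g *+ 2 = f x *+ 2.
Proof. by move=> yV; case: f_S1 => _ /(_ x y); rewrite yV -mulr2n. Qed.

Lemma S1_mul_order3 (x s : G) : (s ^+ 3 = 1)%g -> f (x * s)%g *+ 3 = f x *+ 3.
Proof.
move=> s3; case: f_S1 => _ jensen.
have sV : (s * s = s^-1)%g.
  by rewrite -[(s^-1)%g]mul1g -s3 expgSr mulgK expgS expg1.
have jensen_xs := jensen (x * s)%g s; rewrite mulgK -mulgA sV in jensen_xs.
by rewrite mulrS -jensen_xs addrA jensen -mulrSr.
Qed.

Lemma S1_mul_invol_order3 (x y z : G) :
  (y^-1 = y)%g -> (z^-1 = z)%g -> ((y * z) ^+ 3 = 1)%g -> f (x * (y * z))%g = f x.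
Proof.
move=> yV zV yz3.
have f2 : f (x * (y * z))%g *+ 2 = f x *+ 2.
  by rewrite mulgA !S1_mul_invol.
apply: (@addIr _ (f x *+ 2)); rewrite -{1}f2 -!mulrS.
exact: S1_mul_order3.
Qed.

End JensenEquation.

Lemma hom_S12 (G : finGroupType) (H : zmodType) (f : G -> H) : is_hom f -> S12 f.
Proof.
move=> fM.
have f1 : f 1%g = 0.
  by apply: (@addrI _ (f 1%g)); rewrite addr0 -fM mulg1.
have fV y : f y + f y^-1%g = 0 by rewrite -fM mulgV.
split; [split=> // x y | move=> x y]; rewrite !fM mulr2n addrACA.
- by rewrite fV addr0.
- by rewrite fV add0r.
Qed.

Lemma sqr_mul_invol (G : finGroupType) (x y : G) :
  (y^-1 = y)%g -> ((x * y) ^+ 2 = x * x ^ y)%g.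
Proof. by move=> yV; rewrite expgS expg1 conjgE yV !mulgA. Qed.

Section Transpositions.
Variable T : finType.
Implicit Types (a b c d : T) (s x : {perm T}).

Lemma tperm_braid a b c :
  a != b -> b != c -> a != c -> (tperm a b * tperm b c * tperm a b = tperm a c)%g.
Proof.
move=> ab bc ac.
by rewrite -{1}[tperm a b]tpermV -mulgA -conjgE [tperm a b]tpermC tpermJ_tperm.
Qed.

Lemma tperm_mul_order3 a b d :
  a != b -> b != d -> ((tperm a b * tperm b d) ^+ 3 = 1)%g.
Proof.
move=> ab bd; have [<-|ad] := eqVneq a d.
  by rewrite [tperm b a]tpermC tperm2 expg1n.
have -> : ((tperm a b * tperm b d) ^+ 3 =
    (tperm a b * tperm b d * tperm a b) * (tperm b d * tperm a b * tperm b d))%g.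
  by rewrite !expgS expg0 mulg1 !mulgA.
rewrite tperm_braid // [tperm b d]tpermC [tperm a b]tpermC tperm_braid 1?eq_sym //.
by rewrite [tperm d a]tpermC tperm2.
Qed.

Lemma tperm_commute a b c d :
  a != c -> a != d -> b != c -> b != d -> commute (tperm a b) (tperm c d).
Proof.
move=> ac ad bc bd; apply/commgP/conjg_fixP.
by rewrite tpermJ !tpermD // eq_sym.
Qed.

Lemma tperm_mul_cases (P : {perm T} -> Prop) :
  (forall a b d, a != b -> b != d -> P (tperm a b * tperm b d)%g) ->
  (forall a b c d, a != b -> c != d -> a != c -> a != d -> b != c -> b != d ->
     P (tperm a b * tperm c d)%g) ->
  forall a b c d, a != b -> c != d -> P (tperm a b * tperm c d)%g.
Proof.
move=> Pshared Pdisjoint a b c d.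
have [<-|bc] := eqVneq b c; first exact: Pshared.
have [<-|bd] := eqVneq b d.
  by rewrite [tperm c b]tpermC => ab cb; apply: Pshared; rewrite // eq_sym.
have [<-|ac] := eqVneq a c.
  by rewrite [tperm a b]tpermC => ab ad; apply: Pshared; rewrite // eq_sym.
have [<-|ad] := eqVneq a d.
  by rewrite tpermC [tperm c a]tpermC => ba ca; apply: Pshared; rewrite // eq_sym.
move=> ab cd; exact: Pdisjoint.
Qed.

Lemma tperm_mul_sqrt a b c d :
  a != b -> c != d -> exists t, (t ^+ 2 = tperm a b * tperm c d)%g.
Proof.
move: a b c d.
apply: (@tperm_mul_cases (fun s => exists t, (t ^+ 2 = s)%g))
  => [a b d ab bd | a b c d ab cd ac ad bc bd].
  exists (tperm a b * tperm a d)%g.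
  by rewrite sqr_mul_invol ?tpermV // tpermJ_tperm 1?[tperm d b]tpermC // eq_sym.
exists (tperm a b * (tperm a c * tperm b d))%g.
rewrite sqr_mul_invol; last first.
  by rewrite invMg !tpermV; apply: tperm_commute; rewrite // eq_sym.
by rewrite tpermJ !permM tpermL (tpermD ab) ?tpermL ?(tpermD bc) //; rewrite eq_sym.
Qed.

Lemma odd_perm_hom (H : zmodType) (u : H) :
  u *+ 2 = 0 -> is_hom (fun s : {perm T} => if odd_perm s then u else 0).
Proof.
move=> u2 x y /=; rewrite odd_permM.
by case: (odd_perm x); case: (odd_perm y); rewrite /= ?addr0 ?add0r // -mulr2n u2.
Qed.

Section JensenOnPermutations.
Variables (H : zmodType) (f : {perm T} -> H).
Hypothesis f_S1 : S1 f.

Lemma S1_mul_tperm_pair a b c d :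
  a != b -> c != d -> forall x, f (x * (tperm a b * tperm c d))%g = f x.
Proof.
have shared p q r y : p != q -> q != r -> f (y * (tperm p q * tperm q r))%g = f y.
  by move=> pq qr; apply: S1_mul_invol_order3; rewrite ?tpermV ?tperm_mul_order3.
move: a b c d; apply: (@tperm_mul_cases (fun s => forall x, f (x * s)%g = f x)).
  by move=> a b d ab bd x; apply: shared.
move=> a b c d ab cd _ _ bc _ x.
have -> : (tperm a b * tperm c d =
    (tperm a b * tperm b c) * (tperm b c * tperm c d))%g.
  by rewrite -mulgA (mulgA (tperm b c)) tperm2 mul1g.
by rewrite mulgA !shared.
Qed.

Lemma S1_mul_perm a b :
  a != b ->
  forall s x, f (x * s)%g = if odd_perm s then f (x * tperm a b)%g else f x.
Proof.
move=> ab s; have [ts -> dts] := prod_tpermP s; rewrite odd_perm_prod //.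
elim: ts dts => [|t ts IH] /= dts x; first by rewrite big_nil mulg1.
case/andP: dts => dt dts; rewrite big_cons mulgA IH //.
case: (odd (size ts)) => /=.
  by rewrite -mulgA S1_mul_tperm_pair.
have -> : (x * tperm t.1 t.2 = (x * tperm a b) * (tperm a b * tperm t.1 t.2))%g.
  by rewrite mulgA -(mulgA x) tperm2 mulg1.
by rewrite S1_mul_tperm_pair.
Qed.

Lemma S1_perm_parity a b :
  a != b -> forall s, f s = if odd_perm s then f (tperm a b) else 0.
Proof. by move=> ab s; rewrite -{1}[s]mul1g (S1_mul_perm ab) mul1g f_S1.1. Qed.

Lemma S1_tperm_2torsion a b : f (tperm a b) *+ 2 = 0.
Proof. by rewrite -[tperm a b]mul1g S1_mul_invol ?tpermV // f_S1.1 mul0rn. Qed.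

Lemma S1_is_hom a b : a != b -> is_hom f.
Proof.
move=> ab x y; have fE := S1_perm_parity ab.
rewrite (fE (x * y)%g) (fE x) (fE y).
by apply: odd_perm_hom; apply: S1_tperm_2torsion.
Qed.

End JensenOnPermutations.
End Transpositions.

Lemma transpositionsP n (s : 'S_n) :
  reflect (exists a b, a != b /\ s = tperm a b) (s \in transpositions n).
Proof.
rewrite inE; apply: (iffP existsP).
  by move=> [a /existsP[b /andP[ab /eqP->]]]; exists a, b.
move=> [a [b [ab ->]]].
by exists a; apply/existsP; exists b; rewrite ab eqxx.
Qed.

Lemma gen_transpositions n : <<transpositions n>>%g = [set: 'S_n].
Proof.
apply/eqP; rewrite eqEsubset subsetT; apply/subsetP => s _.
have [ts -> _] := prod_tpermP s; rewrite group_prod // => -[a b] _.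
have [<-|ab] := eqVneq a b; first by rewrite tperm1 group1.
by rewrite mem_gen //; apply/transpositionsP; exists a, b.
Qed.

Theorem mainTheorem7 (n : nat) (H : zmodType) (hn : (2 <= n)%N) :
  (<<transpositions n>>%g = [set: 'S_n])
  /\ (forall t1 t2 : 'S_n, t1 \in transpositions n -> t2 \in transpositions n ->
        exists t : 'S_n, (t ^+ 2)%g = (t1 * t2)%g)
  /\ (forall f : 'S_n -> H, S1 f <-> S12 f)
  /\ (forall f : 'S_n -> H, S1 f <-> is_hom f)
  /\ (forall f : 'S_n -> H, S1 f ->
        exists u : H, u *+ 2 = 0 /\
          forall s : 'S_n, f s = (if odd_perm s then u else 0))
  /\ (forall u : H, u *+ 2 = 0 ->
        S1 (fun s : 'S_n => if odd_perm s then u else 0)).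
Proof.
pose i0 : 'I_n := Ordinal (ltnW hn); pose i1 : 'I_n := Ordinal hn.
have i01 : i0 != i1 by [].
have S1_hom (f : 'S_n -> H) : S1 f -> is_hom f.
  by move=> f_S1; exact: (S1_is_hom f_S1 i01).
split; first exact: gen_transpositions.
split.
  move=> _ _ /transpositionsP[a [b [ab ->]]] /transpositionsP[c [d [cd ->]]].
  exact: tperm_mul_sqrt.
split; first by move=> f; split=> [/S1_hom/hom_S12 | []].
split; first by move=> f; split=> [/S1_hom | /hom_S12 []].
split.
  move=> f f_S1; exists (f (tperm i0 i1)).
  by split; [apply: S1_tperm_2torsion | apply: S1_perm_parity].
by move=> u u2; exact: (hom_S12 (odd_perm_hom u2)).1.
Qed.
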